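(* Fix $\gamma\in\mathbb{R}$. Let $G$ be the directed graph whose vertices are the species $1,\dots,s_0$, with a directed edge from $i$ to $j$ whenever there is a reaction $k$ with $\zeta_{ik}<0$ and $\zeta_{jk}>0$, and let $G_1,\dots,G_p$ be its maximal strongly connected subgraphs (single vertices count as strongly connected). Let $\theta\in[0,\infty)^{s_0}$ and write $\theta=\sum_{j=1}^m\theta^j$ with $\theta^j\in[0,\infty)^{s_0}$, where $\mathrm{supp}(\theta^j)$ is contained in the vertex set of a maximal strongly connected subgraph $G_{i_j}$ and $G_{i_j}\ne G_{i_l}$ for $j\neq l$. Then: (i) if Condition 3.2 holds at $\gamma$ for each $\theta^j$, it holds at $\gamma$ for $\theta$; (ii) if the balance equation (B) holds for each $\theta^j$, then (B) holds for $\theta$; (iii) if the time-scale constraint (T) at $\gamma$ holds for each $\theta^j$, then (T) at $\gamma$ holds for $\theta$. Consequently, if Condition 3.2 (resp. (B), resp. (T) at $\gamma$) holds for every $\theta\in[0,\infty)^{s_0}$ whose support lies in the vertex set of some strongly connected subgraph of $G$, then it holds for every $\theta\in[0,\infty)^{s_0}$.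
   Context: Fix integers $s_0,r_0\ge 1$ and, for $k=1,\dots,r_0$, vectors $\nu_k,\nu_k'\in\mathbb{N}^{s_0}$ (reactant and product vectors of reaction $k$); set $\zeta_k=\nu_k'-\nu_k$. Fix $\alpha\in[0,\infty)^{s_0}$ and $\beta\in\mathbb{R}^{r_0}$ and set $\rho_k=\beta_k+\nu_k\cdot\alpha$. For $\theta\in[0,\infty)^{s_0}$ let $\Gamma_\theta^+=\{k:\theta\cdot\zeta_k>0\}$, $\Gamma_\theta^-=\{k:\theta\cdot\zeta_k<0\}$ and $\mathrm{supp}(\theta)=\{i:\theta_i>0\}$. A maximum over the empty set is $-\infty$. For $\theta\in[0,\infty)^{s_0}$ and $\gamma\in\mathbb{R}$: the balance equation for $\theta$ is (B) $\max_{k\in\Gamma_\theta^-}\rho_k=\max_{k\in\Gamma_\theta^+}\rho_k$; the time-scale constraint for $\theta$ at $\gamma$ is (T) $\gamma\le\max_{i:\theta_i>0}\alpha_i-\max_{k\in\Gamma_\theta^+\cup\Gamma_\theta^-}\rho_k$; Condition 3.2 holds for $\theta$ at $\gamma$ if (B) or (T) holds. *)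

(* Reaction-network data over an arbitrary real field R
   (the paper uses R = the reals; the statement is purely order-algebraic). *)
From HB Require Import structures.
From mathcomp Require Import all_boot all_order all_algebra.
Set Implicit Arguments. Unset Strict Implicit. Unset Printing Implicit Defensive.
Import Order.TTheory GRing.Theory Num.Theory.
Local Open Scope ring_scope.

(* Maximum of a finite list, with None standing for -infinity (max of []). *)
Definition omax (R : realDomainType) (s : seq R) : option R :=
  foldr (fun x o => Some (match o with None => x | Some y => Num.max x y end))
        None s.

Definition omax_over (T : finType) (R : realDomainType) (P : pred T) (f : T -> R)
  : option R := omax [seq f k | k <- enum P].

Section Network.
Variables (R : realFieldType) (s0 r0 : nat).
(* nu k i, nu' k i : reactant / product coefficient of species i in reaction k *)
Variables (nu nu' : 'I_r0 -> 'I_s0 -> nat).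
Variables (alpha : 'I_s0 -> R) (beta : 'I_r0 -> R).

Definition zeta (i : 'I_s0) (k : 'I_r0) : int := (nu' k i)%:Z - (nu k i)%:Z.

Definition dotz (theta : 'I_s0 -> R) (k : 'I_r0) : R :=
  \sum_(i < s0) theta i * (zeta i k)%:~R.

Definition rho (k : 'I_r0) : R := beta k + \sum_(i < s0) (nu k i)%:R * alpha i.

Definition Gamma_plus (theta : 'I_s0 -> R) : pred 'I_r0 :=
  fun k => 0 < dotz theta k.
Definition Gamma_minus (theta : 'I_s0 -> R) : pred 'I_r0 :=
  fun k => dotz theta k < 0.
Definition supp (theta : 'I_s0 -> R) : pred 'I_s0 := fun i => 0 < theta i.

Definition balance (theta : 'I_s0 -> R) : Prop :=
  omax_over (Gamma_minus theta) rho = omax_over (Gamma_plus theta) rho.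

(* (T): gamma <= max_{supp} alpha - max_{Gamma+ u Gamma-} rho, in extended
   arithmetic: x - (-oo) = +oo (so (T) holds when Gamma+ u Gamma- is empty),
   and (-oo) - r = -oo for finite r. *)
Definition timescale (gamma : R) (theta : 'I_s0 -> R) : Prop :=
  match omax_over (supp theta) alpha,
        omax_over (predU (Gamma_plus theta) (Gamma_minus theta)) rho with
  | _, None => True
  | Some a, Some r => gamma <= a - r
  | None, Some _ => False
  end.

Definition cond32 (gamma : R) (theta : 'I_s0 -> R) : Prop :=
  balance theta \/ timescale gamma theta.

Definition sgraph : rel 'I_s0 :=
  fun i j => [exists k : 'I_r0, (zeta i k < 0) && (0 < zeta j k)].

Definition same_scc (i j : 'I_s0) : bool :=
  connect sgraph i j && connect sgraph j i.

End Network.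

From Pilot Require Import Defs.
From HB Require Import structures.
From mathcomp Require Import all_boot all_order all_algebra.
From Stdlib Require Import Classical.
Set Implicit Arguments. Unset Strict Implicit. Unset Printing Implicit Defensive.
Import Order.TTheory GRing.Theory Num.Theory.
Local Open Scope ring_scope.

(* Since theta.zeta_k is the sum of the theta^j.zeta_k, every reaction in
   Gamma^+(theta) u Gamma^-(theta) lies in Gamma^+ u Gamma^- of some piece, and
   supp theta contains every supp theta^j; this alone transfers (T).
   For (B), a reaction consumed by piece j and produced by piece l gives an edge
   from the component of j to that of l, so pieces are strictly ordered by
   reachability of their components.  Let M be the largest rho over reactions
   active in some piece.  A most downstream piece active at level M has, by its
   own balance equation, a reaction of level M in its Gamma^-; no other piece
   produces it, as that piece would lie further downstream, so it is in
   Gamma^-(theta).  Dually a most upstream one gives Gamma^+(theta) at level M.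
   For Condition 3.2: if (T) fails for theta, it fails for every piece active
   at level M, which therefore balances, and that is all the argument uses.
   The second half follows by splitting theta along the components. *)

Section Omax.
Variable R : realDomainType.

Lemma omax_eq0 (s : seq R) : (omax s == None) = (s == [::]).
Proof. by case: s. Qed.

Lemma omax_mem (s : seq R) x :
  omax s = Some x -> x \in s /\ {in s, forall y, y <= x}.
Proof.
elim: s x => [|a s IH] x //= [<-].
case E: (omax s) => [z|]; last first.
  by move/eqP: E; rewrite omax_eq0 => /eqP->; split=> [|y]; rewrite inE // => /eqP->.
have [zs zmax] := IH z E; split.
  by rewrite /Num.max; case: ifP; rewrite inE ?zs ?eqxx ?orbT.
by move=> y; rewrite inE le_max => /predU1P[->|/zmax->]; rewrite ?lexx ?orbT.
Qed.

Lemma omaxP (s : seq R) x :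
  omax s = Some x <-> x \in s /\ {in s, forall y, y <= x}.
Proof.
split; first exact: omax_mem.
case=> xs xmax; case E: (omax s) => [z|]; last first.
  by move/eqP: E; rewrite omax_eq0 => /eqP E; rewrite E in xs.
have [zs zmax] := omax_mem E.
by congr Some; apply/eqP; rewrite eq_le zmax // xmax.
Qed.

Variables (T : finType) (P : pred T) (f : T -> R).

Lemma omax_overP x :
  omax_over P f = Some x <-> (exists2 k, P k & f k = x) /\ (forall k, P k -> f k <= x).
Proof.
rewrite /omax_over omaxP; split.
  case=> /mapP[k]; rewrite mem_enum => Pk -> fmax; split; first by exists k.
  by move=> k' Pk'; apply: fmax; rewrite map_f ?mem_enum.
case=> -[k Pk <-] fmax; split; first by rewrite map_f ?mem_enum.
by move=> _ /mapP[k' Pk' ->]; apply: fmax; rewrite mem_enum in Pk'.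
Qed.

Lemma omax_over_None : omax_over P f = None <-> (forall k, ~~ P k).
Proof.
rewrite /omax_over; apply: (iff_trans (rwP eqP)); rewrite omax_eq0.
split=> [/eqP s0 k | P0].
  apply/negP=> Pk.
  have: f k \in [seq f k | k <- enum P] by rewrite map_f ?mem_enum.
  by rewrite s0.
suff -> : enum P = [::] by [].
by rewrite -enum0; apply: eq_enum => k; rewrite !inE; exact: negbTE (P0 k).
Qed.

Lemma eq_omax_over (Q : pred T) : P =1 Q -> omax_over P f = omax_over Q f.
Proof. by move=> PQ; rewrite /omax_over (eq_enum PQ). Qed.

End Omax.

Section SignedSums.
Variables (R : realDomainType) (I : finType) (P : pred I) (F : I -> R).

Lemma sumr_neq0_term : \sum_(i | P i) F i != 0 -> exists2 i, P i & F i != 0.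
Proof.
have [/exists_inP[i Pi Fi] _|/exists_inPn F0] := boolP [exists (i | P i), F i != 0].
  by exists i.
by rewrite big1 ?eqxx // => i /F0; rewrite negbK => /eqP.
Qed.

Lemma sumr_lt0_term : \sum_(i | P i) F i < 0 -> exists2 i, P i & F i < 0.
Proof.
have [/exists_inP[i Pi Fi] _|/exists_inPn F0] := boolP [exists (i | P i), F i < 0].
  by exists i.
by rewrite ltNge sumr_ge0 // => i /F0; rewrite -leNgt.
Qed.

Lemma sumr_gt0_term : 0 < \sum_(i | P i) F i -> exists2 i, P i & 0 < F i.
Proof.
have [/exists_inP[i Pi Fi] _|/exists_inPn F0] := boolP [exists (i | P i), 0 < F i].
  by exists i.
by rewrite ltNge sumr_le0 // => i /F0; rewrite -leNgt.
Qed.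

End SignedSums.

Lemma sumr_ge0_gt0_term (R : realDomainType) (I : finType) (F : I -> R) j :
  F j < 0 -> 0 <= \sum_i F i -> exists i, 0 < F i.
Proof.
move=> Fj; rewrite (bigD1 j) //= => S.
have [i _ Fi] : exists2 i, i != j & 0 < F i.
  by apply: sumr_gt0_term; rewrite -(ltrD2l (F j)) addr0 (lt_le_trans Fj).
by exists i.
Qed.

Lemma ex_maximal (T : finType) (e : rel T) (P : pred T) x0 :
  irreflexive e -> transitive e -> P x0 ->
  exists2 x, P x & forall y, P y -> ~~ e x y.
Proof.
move=> e_irr e_trans Px0.
case: (arg_minnP (fun x => #|[pred y | e x y]|) Px0) => x Px xmin.
exists x => // y Py; apply/negP => exy; have := xmin y Py; apply/negP.
rewrite -ltnNge; apply: proper_card; apply/properP; split.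
  by apply/subsetP => z; rewrite !inE; apply: e_trans.
by exists y; rewrite !inE ?e_irr.
Qed.

Lemma sum_neg_entry (R : realDomainType) (J K : finType) (d : J -> K -> R)
    (before : rel J) (Q : pred K) :
  irreflexive before -> transitive before ->
  (forall j l k, d j k < 0 -> 0 < d l k -> before j l) ->
  (forall j k, Q k -> d j k != 0 -> exists2 k', Q k' & d j k' < 0) ->
  forall j k, Q k -> d j k != 0 -> exists2 k', Q k' & \sum_j d j k' < 0.
Proof.
move=> before_irr before_trans flow negQ j0 k0 Qk0 dk0.
pose A := [pred j | [exists k, Q k && (d j k != 0)]].
have Aj0 : A j0 by apply/existsP; exists k0; rewrite Qk0.
have [j /existsP[k /andP[Qk djk]] jmax] := ex_maximal before_irr before_trans Aj0.
have [k' Qk' djk'] := negQ j k Qk djk.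
exists k' => //; rewrite ltNge; apply/negP => /(sumr_ge0_gt0_term djk') [l dlk'].
have Al : A l by apply/existsP; exists k'; rewrite Qk' gt_eqF.
by have /negP := jmax l Al; apply; apply: flow djk' dlk'.
Qed.

Section SignBalance.
Variables (R : realDomainType) (J K : finType) (d : J -> K -> R) (before : rel J).
Hypotheses (before_irr : irreflexive before) (before_trans : transitive before).
Hypothesis flow : forall j l k, d j k < 0 -> 0 < d l k -> before j l.

Lemma sum_pos_entry (Q : pred K) :
  (forall j k, Q k -> d j k != 0 -> exists2 k', Q k' & 0 < d j k') ->
  forall j k, Q k -> d j k != 0 -> exists2 k', Q k' & 0 < \sum_j d j k'.
Proof.
move=> posQ j k Qk djk.
have negQ j' k' : Q k' -> - d j' k' != 0 -> exists2 k'', Q k'' & - d j' k'' < 0.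
  rewrite oppr_eq0 => Qk' /(posQ _ _ Qk') [k'' Qk'' d''].
  by exists k''; rewrite ?oppr_lt0.
have neg_flow j1 j2 k' : - d j1 k' < 0 -> 0 < - d j2 k' -> before j2 j1.
  by rewrite oppr_lt0 oppr_gt0 => d1 d2; apply: flow d2 d1.
have ndjk : - d j k != 0 by rewrite oppr_eq0.
have [k' Qk'] := sum_neg_entry (fun j => before_irr j)
  (fun j1 j2 j3 b21 b32 => before_trans b32 b21) neg_flow negQ Qk ndjk.
by rewrite sumrN oppr_lt0; exists k'.
Qed.

Lemma sign_balance (w : K -> R) :
  (forall j k, d j k != 0 -> (forall j' k', d j' k' != 0 -> w k' <= w k) ->
     omax_over (fun k => d j k < 0) w = omax_over (fun k => 0 < d j k) w) ->
  omax_over (fun k => \sum_j d j k < 0) w = omax_over (fun k => 0 < \sum_j d j k) w.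
Proof.
move=> bal; pose N := [pred k | [exists j, d j k != 0]].
case EN: (omax_over N w) => [M|]; last first.
  have D0 k : \sum_j d j k = 0.
    apply: big1 => j _; apply/eqP; apply: contraNT (proj1 (omax_over_None _ _) EN k).
    by move=> djk; apply/existsP; exists j.
  by rewrite !(proj2 (omax_over_None _ _)) // => k; rewrite D0 ltxx.
move/omax_overP: EN => [[k0 /existsP[j0 djk0] wk0] Mmax].
have atM (P : pred K) k : P k -> w k = M ->
    (forall k', P k' -> exists j, d j k' != 0) -> omax_over P w = Some M.
  move=> Pk wk PN; apply/omax_overP; split; first by exists k.
  by move=> k' /PN [j djk']; apply: Mmax; apply/existsP; exists j.
have sides j k : d j k != 0 -> w k = M ->
    (exists2 k', w k' == M & d j k' < 0) /\ (exists2 k', w k' == M & 0 < d j k').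
  move=> djk wk.
  have Bj : omax_over (fun k => d j k < 0) w = omax_over (fun k => 0 < d j k) w.
    apply: (bal _ _ djk) => j' k' dk'.
    by rewrite wk; apply: Mmax; apply/existsP; exists j'.
  have negM : omax_over (fun k => d j k < 0) w = Some M.
    move: (djk); rewrite neq_lt => /orP[neg|pos].
      by apply: atM neg wk _ => k' /lt_eqF/negbT; exists j.
    by rewrite Bj; apply: atM pos wk _ => k' /gt_eqF/negbT; exists j.
  have posM := negM; rewrite Bj in posM.
  move/omax_overP: negM => [[kn neg /eqP wkn] _].
  move/omax_overP: posM => [[kp pos /eqP wkp] _].
  by split; [exists kn | exists kp].
have [km /eqP wkm Dkm] := sum_neg_entry before_irr before_trans flow
  (fun j k Mk djk => (sides j k djk (eqP Mk)).1) (introT eqP wk0) djk0.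
have [kp /eqP wkp Dkp] := sum_pos_entry (fun j k Mk djk => (sides j k djk (eqP Mk)).2)
  (introT eqP wk0) djk0.
have total_term k : \sum_j d j k != 0 -> exists j, d j k != 0.
  by move/sumr_neq0_term => [j _ djk]; exists j.
rewrite (atM _ km) ?(atM _ kp) // => k.
  by move/gt_eqF/negbT/total_term.
by move/lt_eqF/negbT/total_term.
Qed.

End SignBalance.

Section Network.
Variables (R : realFieldType) (s0 r0 : nat) (nu nu' : 'I_r0 -> 'I_s0 -> nat).
Variables (alpha : 'I_s0 -> R) (beta : 'I_r0 -> R) (gamma : R).

Local Notation dotz := (@Defs.dotz R s0 r0 nu nu').
Local Notation zeta := (zeta nu nu').
Local Notation rho := (rho nu alpha beta).
Local Notation E := (sgraph nu nu').
Local Notation same_scc := (same_scc nu nu').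
Local Notation balance := (balance nu nu' alpha beta).
Local Notation timescale := (timescale nu nu' alpha beta gamma).
Local Notation cond32 := (cond32 nu nu' alpha beta gamma).

Lemma dotz_lt0_support t k : (forall i, 0 <= t i) -> dotz t k < 0 ->
  exists2 i, 0 < t i & zeta i k < 0.
Proof.
move=> t_ge0 /sumr_lt0_term[i _]; have := t_ge0 i.
rewrite le_eqVlt => /predU1P[<-|ti]; first by rewrite mul0r ltxx.
by rewrite pmulr_rlt0 // ltrz0; exists i.
Qed.

Lemma dotz_gt0_support t k : (forall i, 0 <= t i) -> 0 < dotz t k ->
  exists2 i, 0 < t i & 0 < zeta i k.
Proof.
move=> t_ge0 /sumr_gt0_term[i _]; have := t_ge0 i.
rewrite le_eqVlt => /predU1P[<-|ti]; first by rewrite mul0r ltxx.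
by rewrite pmulr_rgt0 // ltr0z; exists i.
Qed.

Lemma Gamma_pm_neq0 t :
  predU (Gamma_plus nu nu' t) (Gamma_minus nu nu' t) =1 (fun k => dotz t k != 0).
Proof. by move=> k; rewrite /Gamma_plus /Gamma_minus /= neq_lt orbC. Qed.

Section Pieces.
Variables (J : finType) (theta : 'I_s0 -> R) (th : J -> 'I_s0 -> R) (c : J -> 'I_s0).
Hypothesis th_ge0 : forall j i, 0 <= th j i.
Hypothesis theta_sum : forall i, theta i = \sum_j th j i.
Hypothesis th_scc : forall j i, 0 < th j i -> same_scc (c j) i.
Hypothesis th_distinct :
  forall j l i i', 0 < th j i -> 0 < th l i' -> same_scc (c j) (c l) -> j = l.

Lemma dotz_sum k : dotz theta k = \sum_j dotz (th j) k.
Proof.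
rewrite /Defs.dotz; under eq_bigr => i _ do rewrite theta_sum mulr_suml.
exact: exchange_big.
Qed.

Lemma piece_supp j i : 0 < th j i -> 0 < theta i.
Proof. by move=> thi; rewrite theta_sum (bigD1 j) //= (lt_le_trans thi) ?lerDl ?sumr_ge0. Qed.

Definition strictly_upstream : rel J :=
  fun j l => connect E (c j) (c l) && ~~ connect E (c l) (c j).

Lemma strictly_upstream_irr : irreflexive strictly_upstream.
Proof. by move=> j; rewrite /strictly_upstream connect0. Qed.

Lemma strictly_upstream_trans : transitive strictly_upstream.
Proof.
move=> l j m /andP[cjl nclj] /andP[clm ncml]; apply/andP; split.
  exact: connect_trans cjl clm.
by apply: contra ncml => cmj; apply: connect_trans cmj cjl.
Qed.

Lemma strictly_upstream_flow j l k :
  dotz (th j) k < 0 -> 0 < dotz (th l) k -> strictly_upstream j l.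
Proof.
move=> neg pos.
have [i thi zi] := dotz_lt0_support (th_ge0 j) neg.
have [i' thi' zi'] := dotz_gt0_support (th_ge0 l) pos.
have /andP[cji _] := th_scc thi; have /andP[_ ci'l] := th_scc thi'.
have cjl : connect E (c j) (c l).
  apply: connect_trans cji (connect_trans (connect1 _) ci'l).
  by apply/existsP; exists k; rewrite zi zi'.
rewrite /strictly_upstream cjl; apply/negP => clj.
have jl : j = l by apply: th_distinct thi thi' _; rewrite /Defs.same_scc cjl clj.
by move: (lt_trans neg pos); rewrite jl ltxx.
Qed.

Lemma balance_of_pieces :
  (forall j k, dotz (th j) k != 0 ->
     (forall j' k', dotz (th j') k' != 0 -> rho k' <= rho k) -> balance (th j)) ->
  balance theta.
Proof.
move=> bal.
have sum_neg : Gamma_minus nu nu' theta =1 (fun k => \sum_j dotz (th j) k < 0).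
  by move=> k; rewrite /Gamma_minus dotz_sum.
have sum_pos : Gamma_plus nu nu' theta =1 (fun k => 0 < \sum_j dotz (th j) k).
  by move=> k; rewrite /Gamma_plus dotz_sum.
rewrite /Defs.balance (eq_omax_over _ sum_neg) (eq_omax_over _ sum_pos).
exact: (@sign_balance _ _ _ (fun j k => dotz (th j) k) _ strictly_upstream_irr
  strictly_upstream_trans strictly_upstream_flow).
Qed.

Lemma timescale_of_peak_piece j k : dotz (th j) k != 0 ->
  (forall k', dotz theta k' != 0 -> rho k' <= rho k) ->
  timescale (th j) -> timescale theta.
Proof.
move=> djk peak; rewrite /Defs.timescale !(eq_omax_over _ (Gamma_pm_neq0 _)).
case Er: (omax_over (fun k => dotz theta k != 0) rho) => [r|]; last first.
  by case: (omax_over (supp theta) alpha).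
case Erj: (omax_over (fun k => dotz (th j) k != 0) rho) => [rj|]; last first.
  by move/omax_over_None: Erj => /(_ k); rewrite djk.
case Eaj: (omax_over (supp (th j)) alpha) => [aj|] //.
move/omax_overP: Eaj => [[i thi <-] _] gamma_le.
have [a -> ai] : exists2 a, omax_over (supp theta) alpha = Some a & alpha i <= a.
  case Ea: omax_over => [a|]; last first.
    by move/omax_over_None: Ea => /(_ i); rewrite /supp (piece_supp thi).
  by move/omax_overP: Ea => [_ /(_ i (piece_supp thi))]; exists a.
apply: (le_trans gamma_le); apply: lerB => //.
move/omax_overP: Er => [[k' dk' <-] _]; move/omax_overP: Erj => [_ /(_ k djk)].
exact/le_trans/peak.
Qed.

Lemma piece_of_reaction k : dotz theta k != 0 -> exists j, dotz (th j) k != 0.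
Proof. by rewrite dotz_sum => /sumr_neq0_term[j _ djk]; exists j. Qed.

Lemma timescale_of_pieces : (forall j, timescale (th j)) -> timescale theta.
Proof.
move=> T; case Er: (omax_over (fun k => dotz theta k != 0) rho) => [r|]; last first.
  rewrite /Defs.timescale (eq_omax_over _ (Gamma_pm_neq0 _)) Er.
  by case: (omax_over (supp theta) alpha).
move/omax_overP: Er => [[k /piece_of_reaction[j djk] rk] rmax].
by apply: (timescale_of_peak_piece djk) (T j) => k' /rmax; rewrite rk.
Qed.

Lemma cond32_of_pieces : (forall j, cond32 (th j)) -> cond32 theta.
Proof.
move=> C; have [T|nT] := classic (timescale theta); [by right | left].
apply: balance_of_pieces => j k djk peak.
have [//|Tj] := C j; case: nT; apply: timescale_of_peak_piece djk _ Tj.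
by move=> k' /piece_of_reaction[j' djk']; apply: peak djk'.
Qed.

End Pieces.

Lemma same_scc_sym : symmetric same_scc.
Proof. by move=> i j; rewrite /Defs.same_scc andbC. Qed.

Lemma connect_sym_same_scc : connect_sym same_scc.
Proof. exact: sym_connect_sym same_scc_sym. Qed.

Lemma connect_same_scc : connect same_scc =2 same_scc.
Proof.
move=> i j; apply/idP/idP => [cij|]; last exact: connect1.
have sub : subrel same_scc (connect E) by move=> x y /andP[].
have cji : connect same_scc j i by rewrite connect_sym_same_scc.
by apply/andP; split; [exact: connect_sub sub _ _ cij | exact: connect_sub sub _ _ cji].
Qed.

(* Pieces are indexed by all vertices; only the root of a component carries a
   nonzero one. *)
Definition scc_piece (theta : 'I_s0 -> R) (v i : 'I_s0) : R :=
  if v == fingraph.root same_scc i then theta i else 0.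

Section SccDecomposition.
Variable theta : 'I_s0 -> R.
Hypothesis theta_ge0 : forall i, 0 <= theta i.

Lemma scc_piece_ge0 v i : 0 <= scc_piece theta v i.
Proof. by rewrite /scc_piece; case: ifP. Qed.

Lemma scc_piece_sum i : theta i = \sum_v scc_piece theta v i.
Proof. by rewrite -big_mkcond big_pred1_eq. Qed.

Lemma scc_piece_root v i : 0 < scc_piece theta v i -> v = fingraph.root same_scc i.
Proof. by rewrite /scc_piece; case: eqP; rewrite ?ltxx. Qed.

Lemma scc_piece_scc v i : 0 < scc_piece theta v i -> same_scc v i.
Proof.
move/scc_piece_root->; rewrite -connect_same_scc connect_sym_same_scc.
exact: connect_root.
Qed.

Lemma scc_piece_distinct v v' i i' : 0 < scc_piece theta v i ->
  0 < scc_piece theta v' i' -> same_scc v v' -> v = v'.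
Proof.
move=> /scc_piece_root-> /scc_piece_root->; rewrite -connect_same_scc.
move/(fingraph.rootP connect_sym_same_scc).
by rewrite !(fingraph.root_root connect_sym_same_scc).
Qed.

End SccDecomposition.

End Network.

Theorem lemma3p4 (R : realFieldType) (s0 r0 : nat)
  (nu nu' : 'I_r0 -> 'I_s0 -> nat) (alpha : 'I_s0 -> R) (beta : 'I_r0 -> R)
  (gamma : R) :
  (0 < s0)%N -> (0 < r0)%N -> (forall i, 0 <= alpha i) ->
  (forall (theta : 'I_s0 -> R), (forall i, 0 <= theta i) ->
   forall (m : nat) (th : 'I_m -> 'I_s0 -> R) (c : 'I_m -> 'I_s0),
     (forall j i, 0 <= th j i) ->
     (forall i, theta i = \sum_(j < m) th j i) ->
     (* supp(theta^j) is contained in the SCC of the vertex c j *)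
     (forall j i, 0 < th j i -> same_scc nu nu' (c j) i) ->
     (* the SCCs G_{i_j} are pairwise distinct *)
     (forall j l, j != l -> ~~ same_scc nu nu' (c j) (c l)) ->
     [/\ (forall j, cond32 nu nu' alpha beta gamma (th j)) ->
           cond32 nu nu' alpha beta gamma theta,
         (forall j, balance nu nu' alpha beta (th j)) ->
           balance nu nu' alpha beta theta &
         (forall j, timescale nu nu' alpha beta gamma (th j)) ->
           timescale nu nu' alpha beta gamma theta])
  /\
  [/\ (forall theta : 'I_s0 -> R, (forall i, 0 <= theta i) ->
         (exists v, forall i, 0 < theta i -> same_scc nu nu' v i) ->
         cond32 nu nu' alpha beta gamma theta) ->
       forall theta : 'I_s0 -> R, (forall i, 0 <= theta i) ->
         cond32 nu nu' alpha beta gamma theta,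
      (forall theta : 'I_s0 -> R, (forall i, 0 <= theta i) ->
         (exists v, forall i, 0 < theta i -> same_scc nu nu' v i) ->
         balance nu nu' alpha beta theta) ->
       forall theta : 'I_s0 -> R, (forall i, 0 <= theta i) ->
         balance nu nu' alpha beta theta &
      (forall theta : 'I_s0 -> R, (forall i, 0 <= theta i) ->
         (exists v, forall i, 0 < theta i -> same_scc nu nu' v i) ->
         timescale nu nu' alpha beta gamma theta) ->
       forall theta : 'I_s0 -> R, (forall i, 0 <= theta i) ->
         timescale nu nu' alpha beta gamma theta].
Proof.
move=> _ _ _; split.
  move=> theta _ m th c th_ge0 theta_sum th_scc th_sep.
  have th_distinct j l i i' : 0 < th j i -> 0 < th l i' ->
      same_scc nu nu' (c j) (c l) -> j = l.
    by move=> _ _; apply: contraTeq; apply: th_sep.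
  split.
  - exact: cond32_of_pieces th_ge0 theta_sum th_scc th_distinct.
  - move=> B; apply: balance_of_pieces th_ge0 theta_sum th_scc th_distinct _.
    by move=> j *; apply: B.
  - exact: timescale_of_pieces th_ge0 theta_sum.
have in_scc_pieces theta (theta_ge0 : forall i, 0 <= theta i)
    (P : ('I_s0 -> R) -> Prop) :
  (forall t, (forall i, 0 <= t i) ->
     (exists v, forall i, 0 < t i -> same_scc nu nu' v i) -> P t) ->
  forall v, P (scc_piece nu nu' theta v).
  move=> H v; apply: H; first exact: scc_piece_ge0.
  by exists v => i; apply: scc_piece_scc.
split=> H theta theta_ge0; have := in_scc_pieces theta theta_ge0 _ H;
  have th_ge0 := scc_piece_ge0 nu nu' theta_ge0;
  have theta_sum := scc_piece_sum nu nu' theta;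
  have th_scc := @scc_piece_scc _ _ _ nu nu' theta;
  have th_distinct := @scc_piece_distinct _ _ _ nu nu' theta.
- exact: (cond32_of_pieces th_ge0 theta_sum th_scc th_distinct).
- move=> B; apply: (balance_of_pieces th_ge0 theta_sum th_scc th_distinct).
  by move=> v *; apply: B.
- exact: timescale_of_pieces th_ge0 theta_sum.
Qed.
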